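(* Let $\langle A,k_1,\dots,k_{i_A}\rangle$ and $\langle B,\lambda_1,\dots,\lambda_{i_B}\rangle$ be parameterized problems such that $\langle A,k_1,\dots,k_{i_A}\rangle\le_{PFG}\langle B,\lambda_1,\dots,\lambda_{i_B}\rangle$ via mappings $g_j$, and let $\Lambda\subseteq\{\lambda_1,\dots,\lambda_{i_B}\}$ be such that $FPI(B,\Lambda)$. Then $FPI(A,K_\Lambda)$, where $K_\Lambda$ is the minimum necessary set of $\Lambda$ with respect to $g$.
   Context: Problems $A,B$ have conjectured best running times $a(n),b(n)$. A parameterized problem $\langle L,k_1,\dots,k_\ell\rangle$ is a language $L$ with computable parameterization functions $k_i$ from inputs to $\mathbb{N}$. PFGR: $\langle A,k_1,\dots,k_{i_A}\rangle\le_{PFG}\langle B,\lambda_1,\dots,\lambda_{i_B}\rangle$ if there is an algorithm $R$ such that (1) for every $\varepsilon>0$ there is $\delta>0$ such that $R$ runs in $a^{1-\delta}(n)$ time on inputs $I_A$ of length $n$, making $q$ queries to $\langle B\rangle$ of lengths $n_1,\dots,n_q$ with $\sum_{i=1}^q b^{1-\varepsilon}(n_i)\le c\cdot a^{1-\delta}(n)$ for a constant $c>0$, and $R$ accepts iff $I_A\in\langle A\rangle$; and (2) for each query $q_j$ there is a computable $g_j=(g_{j,1},\dots,g_{j,i_B}):\mathbb{N}^{i_A}\to\mathbb{N}^{i_B}$ with $\lambda_i\le g_{j,i}(k_1,\dots,k_{i_A})$ for every $i$ (parameters of the $j$-th query instance bounded in terms of the parameters of $I_A$). FPI: for a set $K=\{k_1,\dots,k_x\}$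 of parameters of a problem $A$, $FPI(A,K)$ means there is an algorithm solving $A$ in time $O(a^{1-\varepsilon}(n)f(k_1,\dots,k_x))$ for some $\varepsilon>0$ and computable $f$. Minimum necessary set: $K_\Lambda$ is the minimum set $\{k_1,\dots,k_x\}$ of parameters of $A$ needed to bound the parameters in $\Lambda$ through $g$, i.e., such that there is a computable function $h$ with $g_{j,i}(k_1,\dots,k_{i_A})\le h(k_1,\dots,k_x)$ for the parameters $\lambda_i\in\Lambda$ and all $j\in[q]$. *)

From Stdlib Require Import Reals.
From mathcomp Require Import all_boot.

Set Implicit Arguments.
Unset Strict Implicit.
Unset Printing Implicit Defensive.

Definition vcons n (x : nat) (v : 'I_n -> nat) : 'I_n.+1 -> nat :=
  fun i => match unlift ord0 i with None => x | Some j => v j end.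

Inductive prf : nat -> Type :=
| PZero n : prf n
| PSucc : prf 1
| PProj n (i : 'I_n) : prf n
| PComp m n (g : prf m) (fs : 'I_m -> prf n) : prf n
| PRec n (b : prf n) (s : prf n.+2) : prf n.+1
| PMin n (f : prf n.+1) : prf n.

Inductive peval : forall n, prf n -> ('I_n -> nat) -> nat -> Prop :=
| evZero n v : peval (PZero n) v 0
| evSucc v : peval PSucc v (v ord0).+1
| evProj n (i : 'I_n) v : peval (PProj i) v (v i)
| evComp m n (g : prf m) (fs : 'I_m -> prf n) v ys r :
    (forall i, peval (fs i) v (ys i)) -> peval g ys r -> peval (PComp g fs) v r
| evRec0 n (b : prf n) (s : prf n.+2) v r :
    peval b v r -> peval (PRec b s) (vcons 0 v) r
| evRecS n (b : prf n) (s : prf n.+2) v y r r' :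
    peval (PRec b s) (vcons y v) r ->
    peval s (vcons y (vcons r v)) r' -> peval (PRec b s) (vcons y.+1 v) r'
| evMin n (f : prf n.+1) v y :
    peval f (vcons y v) 0 ->
    (forall z, z < y -> exists r, r <> 0 /\ peval f (vcons z v) r) ->
    peval (PMin f) v y.

Definition computable n (f : ('I_n -> nat) -> nat) : Prop :=
  exists c : prf n, forall v, peval c v (f v).

(* inputs are binary strings; injective encoding of strings as naturals *)
Definition code (s : seq bool) : nat := foldr (fun (bt : bool) (m : nat) => m.*2 + bt) 1 s.

Definition computable_inp (k : seq bool -> nat) : Prop :=
  exists F, computable F /\ forall s : seq bool, F (fun _ : 'I_1 => code s) = k s.

Definition depends_only n (K : {set 'I_n}) (f : ('I_n -> nat) -> nat) : Prop :=
  forall v w, (forall t, t \in K -> v t = w t) -> f v = f w.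

Definition lang := seq bool -> bool.

Delimit Scope nat_scope with N.
Local Open Scope R_scope.

Record Model := {
  Alg : Type;
  (* output, running time (own steps), and the sequence of oracle queries
     q_1,...,q_q made by an algorithm on input x with oracle O *)
  out : Alg -> (seq bool -> bool) -> seq bool -> bool;
  time : Alg -> (seq bool -> bool) -> seq bool -> nat;
  queries : Alg -> (seq bool -> bool) -> seq bool -> seq (seq bool)
}.

(* trivial oracle: a plain (oracle-free) algorithm is run with it and
   makes no queries *)
Definition noO : seq bool -> bool := fun _ => false.

Definition plain (M : Model) (S : Alg M) : Prop :=
  forall x, queries S noO x = [::].

(* Oracle substitution: replacing each oracle call of R by a run of the
   plain algorithm S yields a plain algorithm whose time is (up to a
   constant) the time of R plus the time of S on the queries. *)
Definition oracle_substitution (M : Model) : Prop :=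
  forall (Ro S : Alg M), plain S ->
  exists (T : Alg M) (kappa : R),
    plain T /\
    forall x,
      out T noO x = out Ro (out S noO) x /\
      INR (time T noO x) <=
        kappa * INR (time Ro (out S noO) x +
                      \sum_(q <- queries Ro (out S noO) x) time S noO q)%N.

Definition Rsum_seq (s : seq R) : R := foldr Rplus 0 s.

Definition FPI (M : Model) (a : nat -> R) (L : lang) (iL : nat)
    (kap : 'I_iL -> seq bool -> nat) (K : {set 'I_iL}) : Prop :=
  exists (S : Alg M) (eps : R) (f : ('I_iL -> nat) -> nat) (C : R),
    0 < eps /\ computable f /\ depends_only K f /\ plain S /\
    forall x,
      out S noO x = L x /\
      INR (time S noO x) <=
         C * Rpower (a (size x)) (1 - eps) * INR (f (fun t => kap t x)).

Definition PFG_reduces (M : Model) (a b : nat -> R)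
    (A : lang) (iA : nat) (k : 'I_iA -> seq bool -> nat)
    (B : lang) (iB : nat) (lam : 'I_iB -> seq bool -> nat)
    (g : nat -> ('I_iA -> nat) -> 'I_iB -> nat) : Prop :=
  (forall j (i : 'I_iB), computable (fun v => g j v i)) /\
  exists Ro : Alg M,
    (forall x, out Ro B x = A x) /\
    (forall x j, (j < size (queries Ro B x))%N ->
       forall i : 'I_iB,
         (lam i (nth [::] (queries Ro B x) j) <= g j (fun t => k t x) i)%N) /\
    (forall eps : R, 0 < eps ->
       exists delta : R, 0 < delta /\
       exists C c : R, 0 < c /\
       forall x,
         INR (time Ro B x) <= C * Rpower (a (size x)) (1 - delta) /\
         Rsum_seq [seq Rpower (b (size q)) (1 - eps) | q <- queries Ro B x]
            <= c * Rpower (a (size x)) (1 - delta)).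

Definition necessary_set (iA iB : nat) (g : nat -> ('I_iA -> nat) -> 'I_iB -> nat)
    (Lam : {set 'I_iB}) (K : {set 'I_iA}) : Prop :=
  exists h : ('I_iA -> nat) -> nat,
    computable h /\ depends_only K h /\
    forall j v (i : 'I_iB), i \in Lam -> (g j v i <= h v)%N.

Definition minimum_necessary_set (iA iB : nat)
    (g : nat -> ('I_iA -> nat) -> 'I_iB -> nat)
    (Lam : {set 'I_iB}) (K : {set 'I_iA}) : Prop :=
  necessary_set g Lam K /\
  forall K' : {set 'I_iA}, necessary_set g Lam K' -> (#|K| <= #|K'|)%N.

(* Run the PFG reduction of A to B with the FPI algorithm for B substituted
   for its oracle.  Every query q made on input x has its Lambda-parameters
   bounded by h(k(x)), where h witnesses that K is a necessary set.  Replacing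
   the parameter function f of B by the computable majorant
   F(H) = sum of f over the box [0, H]^iB makes the cost of each query at most
   C * b(|q|)^(1-eps) * F(h(k(x))), a function of the K-parameters only.
   Summing over the queries with the time budget of the reduction gives time
   O(a(n)^(1-delta) * (F(h(k(x))) + 1)). *)

From Stdlib Require Import Reals Lra.
From Stdlib Require Import ClassicalEpsilon FunctionalExtensionality.
From mathcomp Require Import all_boot.

Set Implicit Arguments.
Unset Strict Implicit.
Unset Printing Implicit Defensive.

Definition vtl n (w : 'I_n.+1 -> nat) : 'I_n -> nat := fun j => w (lift ord0 j).

Definition upd n (w : 'I_n -> nat) (i : 'I_n) (y : nat) : 'I_n -> nat :=
  fun i' => if i' == i then y else w i'.

Lemma vcons0 n x (v : 'I_n -> nat) : vcons x v ord0 = x.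
Proof. by rewrite /vcons unlift_none. Qed.

Lemma vconsS n x (v : 'I_n -> nat) j : vcons x v (lift ord0 j) = v j.
Proof. by rewrite /vcons liftK. Qed.

Lemma vtl_vcons n x (v : 'I_n -> nat) : vtl (vcons x v) = v.
Proof. by apply: functional_extensionality => j; rewrite /vtl vconsS. Qed.

Lemma vcons_eta n (w : 'I_n.+1 -> nat) : vcons (w ord0) (vtl w) = w.
Proof.
apply: functional_extensionality => i.
by case: (unliftP ord0 i) => [j ->|->]; rewrite ?vconsS ?vcons0.
Qed.

Lemma computable_ext n (f g : ('I_n -> nat) -> nat) :
  computable f -> f =1 g -> computable g.
Proof. by move=> [c Hc] fg; exists c => v; rewrite -fg. Qed.

Lemma computable_comp m n (G : ('I_m -> nat) -> nat)
    (Fs : 'I_m -> ('I_n -> nat) -> nat) :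
  computable G -> (forall i, computable (Fs i)) ->
  computable (fun v => G (fun i => Fs i v)).
Proof.
move=> [cG HG] /choice [cFs HFs]; exists (PComp cG cFs) => v.
exact: (evComp (ys := fun i => Fs i v)).
Qed.

Lemma computable_proj n (i : 'I_n) : computable (fun v => v i).
Proof. by exists (PProj i) => v; constructor. Qed.

Lemma computable_reindex m n (phi : ('I_m -> nat) -> nat) (sigma : 'I_m -> 'I_n) :
  computable phi -> computable (fun v => phi (fun i => v (sigma i))).
Proof. by move=> Hphi; apply: computable_comp => // i; apply: computable_proj. Qed.

Lemma computable_zero n : computable (fun _ : 'I_n -> nat => 0).
Proof. by exists (PZero n) => v; constructor. Qed.

Lemma computable_succ n (F : ('I_n -> nat) -> nat) :
  computable F -> computable (fun v => (F v).+1).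
Proof.
move=> HF; have Hsucc : computable (fun v : 'I_1 -> nat => (v ord0).+1).
  by exists PSucc => v; constructor.
exact: (computable_comp (Fs := fun _ => F) Hsucc).
Qed.

Lemma computable_vcons n m (chi : ('I_n.+1 -> nat) -> nat)
    (F0 : ('I_m -> nat) -> nat) (Fs : 'I_n -> ('I_m -> nat) -> nat) :
  computable chi -> computable F0 -> (forall j, computable (Fs j)) ->
  computable (fun v => chi (vcons (F0 v) (fun j => Fs j v))).
Proof.
move=> Hchi H0 HFs.
apply: (computable_comp (Fs := fun i v => vcons (F0 v) (fun j => Fs j v) i)) => // i.
case: (unliftP ord0 i) => [j ->|->].
  by apply: computable_ext (HFs j) _ => v; rewrite vconsS.
by apply: computable_ext H0 _ => v; rewrite vcons0.
Qed.

Fixpoint prec n (bf : ('I_n -> nat) -> nat) (sf : ('I_n.+2 -> nat) -> nat)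
    (y : nat) (v : 'I_n -> nat) : nat :=
  if y is y'.+1 then sf (vcons y' (vcons (prec bf sf y' v) v)) else bf v.

Lemma computable_prec n (bf : ('I_n -> nat) -> nat) (sf : ('I_n.+2 -> nat) -> nat) :
  computable bf -> computable sf ->
  computable (fun w : 'I_n.+1 -> nat => prec bf sf (w ord0) (vtl w)).
Proof.
move=> [cb Hb] [cs Hs].
have Hrec y v : peval (PRec cb cs) (vcons y v) (prec bf sf y v).
  elim: y => [|y IH] /=; first exact: evRec0.
  exact: evRecS IH (Hs _).
by exists (PRec cb cs) => w; have := Hrec (w ord0) (vtl w); rewrite vcons_eta.
Qed.

Lemma computable_add n (F1 F2 : ('I_n -> nat) -> nat) :
  computable F1 -> computable F2 -> computable (fun v => F1 v + F2 v).
Proof.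
move=> H1 H2.
have Hadd : computable (fun w : 'I_2 -> nat => w ord0 + vtl w ord0).
  have Hs : computable (fun u : 'I_3 -> nat => (u (lift ord0 ord0)).+1).
    exact/computable_succ/computable_proj.
  apply: computable_ext (computable_prec (computable_proj ord0) Hs) _ => w.
  by elim: (w ord0) => [|y IH] //=; rewrite vconsS vcons0 IH.
apply: computable_ext (computable_vcons Hadd H1 (fun _ => H2)) _ => v.
by rewrite /vtl vcons0 vconsS.
Qed.

Lemma computable_sum n (F : ('I_n -> nat) -> nat) (chi : ('I_n.+1 -> nat) -> nat) :
  computable F -> computable chi ->
  computable (fun v => \sum_(i < (F v).+1) chi (vcons i v)).
Proof.
move=> HF Hchi.
pose bf v := chi (vcons 0 v).
pose sf (u : 'I_n.+2 -> nat) := u (lift ord0 ord0) + chi (vcons (u ord0).+1 (vtl (vtl u))).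
have Hbf : computable bf.
  exact: (computable_vcons (Fs := fun j v => v j) Hchi (computable_zero _)
            (@computable_proj _)).
have Hsf : computable sf.
  apply: computable_add; first exact: computable_proj.
  apply: (computable_vcons (Fs := fun j u => u (lift ord0 (lift ord0 j)))) => //.
    exact/computable_succ/computable_proj.
  by move=> j; apply: computable_proj.
have Hsum := computable_prec Hbf Hsf.
have Hsum_F := computable_vcons (Fs := fun j v => v j) Hsum HF (@computable_proj _).
apply: computable_ext Hsum_F _ => v; rewrite vcons0 vtl_vcons.
elim: (F v) => [|y IH] /=; first by rewrite big_ord1.
by rewrite /sf vconsS vcons0 IH !vtl_vcons vcons0 [RHS]big_ord_recr.
Qed.

Lemma computable_sum_upd n (j : 'I_n) (phi : ('I_n.+1 -> nat) -> nat) :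
  computable phi ->
  computable (fun w => \sum_(y < (w ord0).+1) phi (upd w (lift ord0 j) y)).
Proof.
move=> Hphi.
pose chi (z : 'I_n.+2 -> nat) := phi (upd (vtl z) (lift ord0 j) (z ord0)).
have Hchi : computable chi.
  apply: (computable_comp (Fs := fun i z => upd (vtl z) (lift ord0 j) (z ord0) i)) => // i.
  by rewrite /upd; case: (i == _); apply: computable_proj.
apply: computable_ext (computable_sum (computable_proj ord0) Hchi) _ => w.
by apply: eq_bigr => y _; rewrite /chi vtl_vcons vcons0.
Qed.

(* Coordinate [ord0] of [w] holds the side [H] of the box; each coordinate
   [lift ord0 j] with [j] in [s] is summed over [0, H]. *)
Fixpoint box_sum n (s : seq 'I_n) (phi : ('I_n.+1 -> nat) -> nat)
    (w : 'I_n.+1 -> nat) : nat :=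
  if s is j :: s' then \sum_(y < (w ord0).+1) box_sum s' phi (upd w (lift ord0 j) y)
  else phi w.

Lemma computable_box_sum n (s : seq 'I_n) (phi : ('I_n.+1 -> nat) -> nat) :
  computable phi -> computable (box_sum s phi).
Proof. by move=> Hphi; elim: s => [|j s IH] //=; apply: computable_sum_upd. Qed.

Lemma box_sum_ge n (s : seq 'I_n) (phi : ('I_n.+1 -> nat) -> nat) (w w' : 'I_n.+1 -> nat) :
  w' ord0 = w ord0 ->
  (forall j, j \notin s -> w' (lift ord0 j) = w (lift ord0 j)) ->
  (forall j, j \in s -> w' (lift ord0 j) <= w ord0) ->
  phi w' <= box_sum s phi w.
Proof.
elim: s w => [|j s IH] w /= Hw0 Hout Hin.
  have -> : w' = w; last by [].
  apply: functional_extensionality => i.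
  by case: (unliftP ord0 i) => [j ->|->] //; apply: Hout.
have Hy : w' (lift ord0 j) < (w ord0).+1 by rewrite ltnS Hin ?mem_head.
rewrite (bigD1 (Ordinal Hy)) //=; apply: leq_trans (leq_addr _ _).
apply: IH => [|j' Hj'|j' Hj']; rewrite /upd ?(negbTE (neq_lift _ _)) //.
  rewrite (inj_eq (@lift_inj _ ord0)); case: eqP => [-> //|/eqP Hne].
  by apply: Hout; rewrite in_cons negb_or Hne.
by apply: Hin; rewrite in_cons Hj' orbT.
Qed.

Definition box_bound m (f : ('I_m -> nat) -> nat) (H : nat) : nat :=
  box_sum (enum 'I_m) (fun w => f (vtl w)) (vcons H (fun _ => 0)).

Lemma computable_box_bound m n (f : ('I_m -> nat) -> nat) (h : ('I_n -> nat) -> nat) :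
  computable f -> computable h -> computable (fun v => box_bound f (h v)).
Proof.
move=> Hf Hh; apply: (computable_vcons (Fs := fun _ _ => 0)) => //.
  exact/computable_box_sum/computable_reindex.
by move=> _; apply: computable_zero.
Qed.

Lemma box_bound_ge m (f : ('I_m -> nat) -> nat) (H : nat) (w : 'I_m -> nat) :
  (forall i, w i <= H) -> f w <= box_bound f H.
Proof.
move=> Hw; rewrite -[w in f w](vtl_vcons H).
by apply: box_sum_ge => [|j|j _]; rewrite ?vcons0 ?vconsS ?mem_enum.
Qed.

Local Open Scope R_scope.

Lemma Rpower_ge0 x y : 0 <= Rpower x y.
Proof. exact/Rlt_le/exp_pos. Qed.

Lemma INR_sum_le (T : eqType) (s : seq T) (t : T -> nat) (X : T -> R) (c : R) :
  (forall q, q \in s -> INR (t q) <= c * X q) ->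
  INR (\sum_(q <- s) t q) <= c * Rsum_seq [seq X q | q <- s].
Proof.
elim: s => [|q s IH] Hs; first by rewrite big_nil /=; lra.
rewrite big_cons plus_INR /= Rmult_plus_distr_l.
apply: Rplus_le_compat; first by apply: Hs; rewrite mem_head.
by apply: IH => q' Hq'; apply: Hs; rewrite in_cons Hq' orbT.
Qed.

(* Replacing the parameter function by its majorant over boxes lets a single
   bound [H] on the Lambda-parameters of an instance bound its cost. *)
Lemma FPI_box_bound (M : Model) (b : nat -> R) (B : lang) (iB : nat)
    (lam : 'I_iB -> seq bool -> nat) (Lam : {set 'I_iB}) :
  FPI M b B lam Lam ->
  exists (S : Alg M) (eps : R) (Psi : nat -> nat) (C : R),
    [/\ 0 < eps, plain S, out S noO = B, 0 <= C &
    (forall n (h : ('I_n -> nat) -> nat), computable h -> computable (fun v => Psi (h v)))] /\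
    forall (H : nat) (q : seq bool), (forall i, i \in Lam -> (lam i q <= H)%N) ->
      INR (time S noO q) <= C * INR (Psi H) * Rpower (b (size q)) (1 - eps).
Proof.
move=> [S [eps [f [C [Heps [Hf [Hfdep [HS HSB]]]]]]]].
exists S, eps, (box_bound f), (Rmax C 0); split.
  split=> //; last by move=> n h; apply: computable_box_bound.
    by apply: functional_extensionality => x; case: (HSB x).
  exact: Rmax_r.
move=> H q Hq; have [_ HSq] := HSB q.
pose w i := if i \in Lam then lam i q else 0%N.
have Hfw : (f (fun i => lam i q) <= box_bound f H)%N.
  rewrite (Hfdep _ w) => [|i Hi]; last by rewrite /w Hi.
  by apply: box_bound_ge => i; rewrite /w; case: ifP => // /Hq.
have /le_INR HfP := leP Hfw.
have HX := Rpower_ge0 (b (size q)) (1 - eps).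
have HF := pos_INR (f (fun i => lam i q)).
have HCmax := Rmax_l C 0; have HCpos := Rmax_r C 0.
have HXF : 0 <= Rpower (b (size q)) (1 - eps) * INR (f (fun i => lam i q)) by nra.
have HCX : 0 <= Rmax C 0 * Rpower (b (size q)) (1 - eps) by nra.
apply: Rle_trans HSq _; nra.
Qed.

Lemma substitution_time_le (tT tR tS kappa C C' c A P Rs : R) :
  0 <= tR -> 0 <= tS -> 0 <= A -> 0 <= P -> 0 <= C' -> 0 <= c ->
  tT <= kappa * (tR + tS) -> tR <= C * A -> tS <= C' * P * Rs -> Rs <= c * A ->
  tT <= Rmax kappa 0 * (Rmax C 0 + C' * c) * A * (P + 1).
Proof.
move=> HtR HtS HA HP HC' Hc HtT HR HS HRs.
have HCmax := Rmax_l C 0; have HCpos := Rmax_r C 0.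
have Hkmax := Rmax_l kappa 0; have Hkpos := Rmax_r kappa 0.
have HS' : tS <= C' * c * A * P.
  apply: Rle_trans HS _; have HC'P : 0 <= C' * P by nra.
  nra.
have Hsum : tR + tS <= (Rmax C 0 + C' * c) * A * (P + 1).
  have : 0 <= Rmax C 0 * A by nra.
  have : 0 <= C' * c * A by apply: Rmult_le_pos => //; nra.
  nra.
apply: Rle_trans HtT _; have Hpos : 0 <= tR + tS by lra.
have -> : Rmax kappa 0 * (Rmax C 0 + C' * c) * A * (P + 1)
  = Rmax kappa 0 * ((Rmax C 0 + C' * c) * A * (P + 1)) by ring.
nra.
Qed.

Theorem mainTheorem4 (M : Model) (HM : oracle_substitution M)
    (a b : nat -> R) (ha : forall n, Rlt 0 (a n)) (hb : forall n, Rlt 0 (b n))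
    (A : lang) (iA : nat) (k : 'I_iA -> seq bool -> nat)
    (hk : forall t, computable_inp (k t))
    (B : lang) (iB : nat) (lam : 'I_iB -> seq bool -> nat)
    (hlam : forall t, computable_inp (lam t))
    (g : nat -> ('I_iA -> nat) -> 'I_iB -> nat)
    (Hred : PFG_reduces M a b A k B lam g)
    (Lam : {set 'I_iB}) (HB : FPI M b B lam Lam)
    (K : {set 'I_iA}) (HK : minimum_necessary_set g Lam K) :
  FPI M a A k K.
Proof.
have [_ [Ro [HRo_out [HRo_params HRo_time]]]] := Hred.
have [[h [Hh [Hhdep Hgh]]] _] := HK.
have [S [eps [Psi [C' [[Heps HS HSB HC' HPsi] HStime]]]]] := FPI_box_bound HB.
have [delta [Hdelta [C [c [Hc HRo_cost]]]]] := HRo_time eps Heps.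
have [T [kappa [HT HTRoS]]] := HM Ro S HS.
exists T, delta, (fun v => (Psi (h v)).+1), (Rmax kappa 0 * (Rmax C 0 + C' * c)).
split=> //; split; first exact/computable_succ/HPsi.
split; first by move=> v w Evw; rewrite /= (Hhdep v w Evw).
split=> // x; have [HTout HTtime] := HTRoS x; rewrite HSB in HTout HTtime.
split; first by rewrite HTout HRo_out.
have [HRo_t HRo_q] := HRo_cost x.
have Hquery q : q \in queries Ro B x ->
    INR (time S noO q) <= C' * INR (Psi (h (k^~ x))) * Rpower (b (size q)) (1 - eps).
  move=> Hq; apply: HStime => i Hi; rewrite -(nth_index [::] Hq).
  by apply: leq_trans (HRo_params _ _ _ i) (Hgh _ _ _ Hi); rewrite index_mem.
rewrite plus_INR in HTtime; rewrite S_INR.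
apply: substitution_time_le HTtime HRo_t (INR_sum_le Hquery) HRo_q;
  by [apply: pos_INR | apply: Rpower_ge0 | lra].
Qed.
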